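(* Let $h_m:[a,b]\to[c_m,d_m]$ ($m\in\mathcal M\subset\mathbb N$) be continuous increasing functions such that $\sum_{m\in\mathcal M}h_m(x)<\infty$ for all $x\in[a,b]$. Let $K\subset[a,b]$ be closed with $\lambda(h_m(K))=0$ for all $m\in\mathcal M$. Then $h(x):=\sum_{m\in\mathcal M}h_m(x)$ defines a continuous increasing function $h:[a,b]\to[c,d]$ (for some $c,d\in\mathbb R$) with $\lambda(h(K))=0$.
   Context: $\lambda$ denotes Lebesgue measure on $\mathbb R$. *)

From HB Require Import structures.
From mathcomp Require Import all_boot all_order all_algebra.
From mathcomp Require Import all_classical all_reals all_analysis.
Set Implicit Arguments. Unset Strict Implicit. Unset Printing Implicit Defensive.

From HB Require Import structures.
From mathcomp Require Import all_boot all_order all_algebra.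
From mathcomp Require Import all_classical all_reals all_analysis.
From mathcomp Require Import ring lra measurable_realfun.
Import Order.TTheory GRing.Theory Num.Theory.
Import numFieldNormedType.Exports.
Local Open Scope classical_set_scope.
Local Open Scope ring_scope.

Set Implicit Arguments.
Unset Strict Implicit.
Unset Printing Implicit Defensive.

(* The partial sums S_N are continuous and the tails T_N = h - S_N are
   nondecreasing on [a, b], so the oscillation of T_N on [a, b] is at most
   T_N b - T_N a, which tends to 0: h is continuous.
   For the null image, cut [a, b] into n equal cells and let V_n g be the sum of
   the increments of g over the cells meeting K.  For nondecreasing g,
   lambda(g K) <= V_n g; moreover V_n is additive in g, V_n T_N <= T_N b - T_N a,
   and V_n h_m -> 0 when lambda(h_m K) = 0, because the images of the cells
   eventually lie in an open set of small measure containing the compact h_m(K).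
   Hence lambda(h K) <= V_n S_N + (T_N b - T_N a) is arbitrarily small. *)

Section continuity.
Context {R : realType}.
Implicit Types (A : set R) (f g : R -> R).

Lemma continuous_withinP A f :
  {within A, continuous f} <-> (forall x, A x -> forall e : R, 0 < e ->
    exists2 d : R, 0 < d & forall y, A y -> `|x - y| < d -> `|f x - f y| < e).
Proof.
rewrite -[X in X <-> _]/(continuous (f : subspace A -> R)) subspace_continuousP.
split=> [fc x Ax e e0|fc x Ax].
  have /cvgrPdist_lt/(_ e e0) := fc x Ax.
  by rewrite near_withinE => /nbhs_ballP[d d0 fd]; exists d => // y Ay xy; apply: fd.
apply/cvgrPdist_lt => e e0; rewrite near_withinE; apply/nbhs_ballP.
by have [d d0 fd] := fc x Ax e e0; exists d => // y xy Ay; apply: fd.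
Qed.

Lemma continuous_within_oscillation A f :
  (forall e : R, 0 < e -> exists2 g, {within A, continuous g} &
     forall x y, A x -> A y -> `|(f x - g x) - (f y - g y)| <= e) ->
  {within A, continuous f}.
Proof.
move=> approx; apply/continuous_withinP => x Ax e e0.
have e2 : 0 < e / 2 by rewrite divr_gt0.
have [g /continuous_withinP gc osc] := approx _ e2.
have [d d0 gd] := gc x Ax _ e2.
exists d => // y Ay xy.
have -> : f x - f y = (g x - g y) + ((f x - g x) - (f y - g y)) by ring.
rewrite (le_lt_trans (ler_normD _ _)) //.
by have := gd y Ay xy; have := osc x y Ax Ay; lra.
Qed.

(* The intermediate values z are there because a nondecreasing g maps a cell
   between the images of its endpoints. *)
Lemma compact_image_open_unif A K g U :
  {within A, continuous g} -> compact K -> K `<=` A -> open U -> g @` K `<=` U ->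
  \forall d \near 0, forall x y1 y2 z, K x -> A y1 -> A y2 ->
    `|x - y1| <= d -> `|x - y2| <= d -> g y1 <= z <= g y2 -> U z.
Proof.
move=> /continuous_withinP gc /compact_near_coveringP cK KA oU gKU.
pose P d x := forall y1 y2 z, A y1 -> A y2 ->
  `|x - y1| <= d -> `|x - y2| <= d -> g y1 <= z <= g y2 -> U z.
suff : \forall d \near 0, K `<=` P d.
  by apply: filterS => d KP x y1 y2 z Kx; exact: KP.
apply: (cK R (nbhs 0) P _) => x Kx.
have /nbhs_ballP[s s0 sU] : nbhs (g x) U.
  by apply: open_nbhs_nbhs; split => //; apply: gKU; exists x.
have [d d0 gd] := gc x (KA x Kx) s s0.
have d2 : 0 < d / 2 by rewrite divr_gt0.
exists ([set x' | `|x - x'| < d / 2], [set r | `|r| < d / 2]).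
  split; first by apply/nbhs_ballP; exists (d / 2).
  by apply/nbhs_ballP; exists (d / 2) => // r; rewrite -ball_normE /= sub0r normrN.
move=> [x' r] /= [xx' r0] y1 y2 z Ay1 Ay2 x'y1 x'y2 /andP[z1 z2].
have near_x y : A y -> `|x' - y| <= r -> `|g x - g y| < s.
  move=> Ay x'y; apply: gd => //.
  rewrite (le_lt_trans (ler_distD x' _ _)) //.
  by have := ler_norm r; lra.
apply: sU; rewrite /ball /=.
move: (near_x _ Ay1 x'y1) (near_x _ Ay2 x'y2); rewrite !ltr_norml; lra.
Qed.

End continuity.

Section nondecreasing_segment.
Context {R : realType} (a b : R) (g : R -> R).
Hypothesis g_mono : {in `[a, b] &, nondecreasing g}.

Lemma nondecreasing_segment_image x : x \in `[a, b] -> g x \in `[g a, g b].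
Proof.
move=> xab; move: (xab); rewrite in_itv /= => /andP[ax xb].
have leab := le_trans ax xb.
by rewrite in_itv /= !g_mono // in_itv /= lexx leab.
Qed.

Lemma ler_dist_nondecreasing x y : x \in `[a, b] -> y \in `[a, b] ->
  `|g x - g y| <= g b - g a.
Proof.
move=> /nondecreasing_segment_image + /nondecreasing_segment_image.
rewrite !in_itv /= => /andP[? ?] /andP[? ?].
by rewrite ler_norml; apply/andP; split; lra.
Qed.

End nondecreasing_segment.

Lemma lebesgue_measure_itv_bnd {R : realType} (l r : bool) (x y : R) : x <= y ->
  lebesgue_measure [set` Interval (BSide l x) (BSide r y)] = (y - x)%:E.
Proof.
move=> lexy; rewrite lebesgue_measure_itv /= lte_fin.
have [_|leyx] := ltP x y; first by rewrite -EFinD.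
have -> : y = x by apply/le_anti/andP.
by rewrite subrr.
Qed.

Lemma closed_segment_image_compact {R : realType} (a b : R) (K : set R)
    (g : R -> R) :
  {within `[a, b], continuous g} -> closed K -> K `<=` `[a, b] -> compact (g @` K).
Proof.
move=> gc cK Kab; apply: continuous_compact.
  exact: continuous_subspaceW Kab gc.
exact: subclosed_compact cK (@segment_compact R a b) Kab.
Qed.

Section grid.
Context {R : realType} (a b : R) (K : set R).
Hypothesis leab : a <= b.
Implicit Types (g : R -> R) (n i j : nat).

(* For n = 0 every grid point is a, since x / 0 = 0. *)
Definition grid n i : R := a + i%:R * ((b - a) / n%:R).

Definition grid_cell_meets n i : Prop :=
  exists2 x, K x & grid n i <= x <= grid n i.+1.

Definition grid_variation g n : R :=
  \sum_(0 <= i < n | `[< grid_cell_meets n i >]) (g (grid n i.+1) - g (grid n i)).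

Lemma gridS_sub n i : grid n i.+1 - grid n i = (b - a) / n%:R.
Proof. rewrite /grid -addn1 natrD; lra. Qed.

Lemma grid_step_ge0 n : 0 <= (b - a) / n%:R.
Proof. by rewrite divr_ge0 ?subr_ge0. Qed.

Lemma grid_step_cvg0 : (b - a) / n%:R @[n --> \oo] --> 0.
Proof.
have inv_cvg0 : n%:R^-1 @[n --> \oo] --> (0 : R).
  apply: (gtr0_cvgV0 (f := fun n : nat => n%:R : R) _).2; last exact: cvgr_idn.
  by near=> n; rewrite ltr0n; near: n; exists 1%N.
by rewrite -(mulr0 (b - a)); apply: cvgM => //; exact: cvg_cst.
Unshelve. all: by end_near.
Qed.

Lemma grid_le n i j : (i <= j)%N -> grid n i <= grid n j.
Proof. by move=> ij; rewrite lerD2l ler_wpM2r ?grid_step_ge0 ?ler_nat. Qed.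

Lemma grid0 n : grid n 0 = a.
Proof. by rewrite /grid mul0r addr0. Qed.

Lemma grid_last n : (0 < n)%N -> grid n n = b.
Proof.
by move=> n0; rewrite /grid mulrCA divff ?mulr1 ?pnatr_eq0 -?lt0n //; lra.
Qed.

Lemma grid_itv n i : (i <= n)%N -> grid n i \in `[a, b].
Proof.
move=> lein; rewrite in_itv /= -{1}(grid0 n) grid_le //=.
case: n lein => [|n] lein.
  by move: lein; rewrite leqn0 => /eqP->; rewrite grid0.
by rewrite -(@grid_last n.+1) // grid_le.
Qed.

Lemma le_grid_image g n i j : {in `[a, b] &, nondecreasing g} ->
  (i <= j)%N -> (j <= n)%N -> g (grid n i) <= g (grid n j).
Proof.
by move=> gm ij jn; apply: gm; rewrite ?grid_itv ?grid_le //; exact: leq_trans jn.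
Qed.

Lemma grid_cover n x : (0 < n)%N -> x \in `[a, b] ->
  exists2 i, (i < n)%N & grid n i <= x <= grid n i.+1.
Proof.
rewrite in_itv /= => n0 /andP[ax xb].
set s := (b - a) / n%:R.
have [s0|s_neq0] := eqVneq s 0.
  exists 0%N => //; rewrite /grid -/s s0 !mulr0 addr0.
  move: s0 => /eqP; rewrite mulf_eq0 invr_eq0 pnatr_eq0 (gtn_eqF n0) orbF subr_eq0.
  move=> /eqP; lra.
have s_gt0 : 0 < s by rewrite lt0r s_neq0 grid_step_ge0.
set k := Num.truncn ((x - a) / s).
have /andP[lek ltk1] : (k%:R <= (x - a) / s < k.+1%:R).
  by apply/truncn_itv/divr_ge0; [rewrite subr_ge0 | exact: ltW].
have [kn|nk] := ltnP k n.
  exists k => //; rewrite /grid -/s; apply/andP; split.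
    by move: lek; rewrite ler_pdivlMr //; lra.
  by move: ltk1; rewrite ltr_pdivrMr //; lra.
have xb' : x = b.
  have : n%:R <= (x - a) / s by apply: le_trans lek; rewrite ler_nat.
  rewrite ler_pdivlMr // /s mulrCA divff ?mulr1 ?pnatr_eq0 -?lt0n //; lra.
exists n.-1; first by rewrite prednK.
rewrite prednK // grid_last // xb' lexx andbT.
by have := grid_itv (leq_pred n); rewrite in_itv /= => /andP[].
Qed.

Lemma grid_variation_ge0 g n : {in `[a, b] &, nondecreasing g} ->
  0 <= grid_variation g n.
Proof.
move=> gm; rewrite /grid_variation big_seq_cond sumr_ge0 // => i.
by rewrite mem_index_iota subr_ge0 => /andP[/andP[_ ?] _]; exact: le_grid_image.
Qed.

Lemma grid_variation_cst c n : grid_variation (cst c) n = 0.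
Proof. by rewrite /grid_variation big1 // => i _; rewrite subrr. Qed.

Lemma grid_variationD g1 g2 n :
  grid_variation (g1 \+ g2) n = grid_variation g1 n + grid_variation g2 n.
Proof. by rewrite /grid_variation -big_split /=; apply: eq_bigr => i _; ring. Qed.

Lemma grid_variation_le g n : {in `[a, b] &, nondecreasing g} -> (0 < n)%N ->
  grid_variation g n <= g b - g a.
Proof.
move=> gm n0; rewrite /grid_variation big_mkcond /=.
rewrite (@le_trans _ _ (\sum_(0 <= i < n) (g (grid n i.+1) - g (grid n i)))) //.
  apply: ler_sum_nat => i /andP[_ ltin]; case: ifP => // _.
  by rewrite subr_ge0 le_grid_image.
by rewrite telescope_sumr // grid_last // grid0.
Qed.

Lemma measure_image_le_grid_variation g n : {in `[a, b] &, nondecreasing g} ->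
  K `<=` `[a, b] -> measurable (g @` K) -> (0 < n)%N ->
  (lebesgue_measure (g @` K) <= (grid_variation g n)%:E)%E.
Proof.
move=> gm Kab mgK n0.
pose F i := if `[< grid_cell_meets n i >]
  then `[g (grid n i), g (grid n i.+1)]%classic else set0.
have mF i : measurable (F i) by rewrite /F; case: ifP.
have gK_sub : g @` K `<=` \big[setU/set0]_(i < n) F i.
  move=> _ [x Kx <-]; have xab := Kab x Kx.
  have [i ltin /andP[lex lex1]] := grid_cover n0 xab.
  rewrite -bigcup_mkord; exists i => //.
  rewrite /F asboolT; last by exists x; rewrite ?lex.
  by rewrite /= in_itv /= !gm ?grid_itv //; exact: ltnW.
apply: (le_trans (@le_measure _ _ _ lebesgue_measure _ _ _ _ gK_sub)).
  by rewrite inE.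
  by rewrite inE; apply: bigsetU_measurable => i _; exact: mF.
apply: (le_trans (Boole_inequality _ _)) => [i _|]; first exact: mF.
rewrite /grid_variation -sumEFin big_mkord [X in (_ <= X)%E]big_mkcond /=.
apply: lee_sum => i _; rewrite /F; case: ifP => _; last by rewrite measure0.
by rewrite lebesgue_measure_itv_bnd //; apply: le_grid_image => //; exact: ltnW.
Qed.

(* Half-open image cells, so that they are pairwise disjoint. *)
Lemma grid_variation_le_measure g n (U : set R) : {in `[a, b] &, nondecreasing g} ->
  measurable U ->
  (forall i, (i < n)%N -> grid_cell_meets n i ->
     `]g (grid n i), g (grid n i.+1)] `<=` U) ->
  ((grid_variation g n)%:E <= lebesgue_measure U)%E.
Proof.
move=> gm mU cellsU.
pose F i := if (i < n)%N && `[< grid_cell_meets n i >]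
  then `]g (grid n i), g (grid n i.+1)]%classic else set0.
have mF i : measurable (F i) by rewrite /F; case: ifP.
have F_disj : trivIset setT F.
  suff F_disj i j : (i < j)%N -> F i `&` F j = set0.
    move=> i j _ _ [z Fijz]; case: (ltngtP i j) => // [ltij|ltji].
      by rewrite (F_disj _ _ ltij) in Fijz.
    by rewrite setIC (F_disj _ _ ltji) in Fijz.
  move=> ltij; apply/seteqP; split => // z []; rewrite /F.
  case: ifP => [/andP[ltin _]|_] //; case: ifP => [/andP[ltjn _]|_] //.
  rewrite /= !in_itv /= => /andP[_ zi] /andP[zj _].
  have := le_grid_image gm ltij (ltnW ltjn); lra.
have -> : (grid_variation g n)%:E = \sum_(i < n) lebesgue_measure (F i).
  rewrite /grid_variation -sumEFin big_mkcond big_mkord; apply: eq_bigr => i _.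
  rewrite /F ltn_ord /=; case: ifP => _; last by rewrite measure0.
  by rewrite lebesgue_measure_itv_bnd //; apply: le_grid_image.
rewrite -measure_bigsetU //; apply: le_measure; rewrite ?inE //.
  by apply: bigsetU_measurable => i _; exact: mF.
rewrite -bigcup_mkord => z [i _]; rewrite /F.
by case: ifP => [/andP[ltin /asboolP cell]|_] //; exact: cellsU.
Qed.

Lemma grid_cells_image_in_open g (U : set R) :
  {within `[a, b], continuous g} -> closed K -> K `<=` `[a, b] ->
  open U -> g @` K `<=` U ->
  \forall n \near \oo, forall i, (i < n)%N -> grid_cell_meets n i ->
    `]g (grid n i), g (grid n i.+1)] `<=` U.
Proof.
move=> gc cK Kab oU gKU.
have cK' : compact K := subclosed_compact cK (@segment_compact R a b) Kab.
have /nbhs_ballP[r r0 cover] := compact_image_open_unif gc cK' Kab oU gKU.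
have /cvgrPdist_lt/(_ r r0) := grid_step_cvg0.
apply: filterS => n step_r i ltin [x Kx /andP[lex lex1]] z /=.
rewrite in_itv /= => /andP[gz gz1].
have step := gridS_sub n i.
apply: (cover _ step_r x (grid n i) (grid n i.+1) z Kx).
- exact: grid_itv (ltnW ltin).
- exact: grid_itv ltin.
- by rewrite ler_norml; apply/andP; split; lra.
- by rewrite ler_norml; apply/andP; split; lra.
- by rewrite (ltW gz) gz1.
Qed.

Lemma grid_variation_cvg0 g : {within `[a, b], continuous g} ->
  {in `[a, b] &, nondecreasing g} -> closed K -> K `<=` `[a, b] ->
  lebesgue_measure (g @` K) = 0%E -> grid_variation g n @[n --> \oo] --> 0.
Proof.
move=> gc gm cK Kab gK0; apply/cvgrPdist_lt => e e0.
have mgK : measurable (g @` K).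
  by apply: compact_measurable; exact: closed_segment_image_compact gc cK Kab.
have gK_fin : (lebesgue_measure (g @` K) < +oo)%E by rewrite gK0 ltry.
have [U [oU gKU UgKe]] := lebesgue_regularity_outer mgK gK_fin e0.
have mU := open_measurable oU.
have Ue : (lebesgue_measure U < e%:E)%E.
  by rewrite -(setDUK gKU) setUC measureU0 //; exact: measurableD.
have := grid_cells_image_in_open gc cK Kab oU gKU.
apply: filterS => n cellsU; rewrite sub0r normrN ger0_norm ?grid_variation_ge0 //.
by rewrite -lte_fin (le_lt_trans _ Ue) // grid_variation_le_measure.
Qed.

End grid.

Section monotone_series.
Context {R : realType} (a b : R) (M : set nat) (f : nat -> R -> R).
Hypothesis f_cont : forall m, m \in M -> {within `[a, b], continuous f m}.
Hypothesis f_mono : forall m, m \in M -> {in `[a, b] &, nondecreasing (f m)}.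

Definition psum N x := \sum_(0 <= m < N | m \in M) f m x.
Definition series_lim x := limn (psum ^~ x).
Definition series_tail N x := series_lim x - psum N x.

Hypothesis psum_cvg : forall x, x \in `[a, b] -> cvgn (psum ^~ x).

Lemma psum0 : psum 0 = cst 0.
Proof. by apply/funext => x; rewrite /psum big_geq. Qed.

Lemma psumS N : psum N.+1 = psum N \+ (if N \in M then f N else cst 0).
Proof.
apply/funext => x; rewrite /psum big_mkcond big_nat_recr //= -big_mkcond.
by case: ifP.
Qed.

Lemma psum_continuous N : {within `[a, b], continuous (psum N)}.
Proof.
elim: N => [|N IH]; rewrite ?psum0 ?psumS.
  exact/continuous_subspaceT/cst_continuous.
apply: within_continuousD => //; case: ifPn => [/f_cont //|_].
exact/continuous_subspaceT/cst_continuous.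
Qed.

Lemma psum_incr_le_series N x y : x \in `[a, b] -> y \in `[a, b] -> x <= y ->
  psum N y - psum N x <= series_lim y - series_lim x.
Proof.
move=> xab yab lexy.
apply: cvgr_to_ge (cvgB (psum_cvg yab) (psum_cvg xab)) _.
near=> n; have leNn : (N <= n)%N by near: n; exists N.
rewrite !fctE /psum !(big_cat_nat (leq0n N) leNn) /=.
have : 0 <= \sum_(N <= m < n | m \in M) f m y - \sum_(N <= m < n | m \in M) f m x.
  by rewrite -sumrB sumr_ge0 // => m mM; rewrite subr_ge0 f_mono.
lra.
Unshelve. all: by end_near.
Qed.

Lemma series_lim_nondecreasing : {in `[a, b] &, nondecreasing series_lim}.
Proof.
move=> x y xab yab lexy; have := psum_incr_le_series 0 xab yab lexy.
by rewrite psum0 /=; lra.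
Qed.

Lemma series_tail_nondecreasing N : {in `[a, b] &, nondecreasing (series_tail N)}.
Proof.
move=> x y xab yab lexy; have := psum_incr_le_series N xab yab lexy.
rewrite /series_tail; lra.
Qed.

Lemma series_tail_range_cvg0 : a <= b ->
  series_tail N b - series_tail N a @[N --> \oo] --> 0.
Proof.
move=> leab.
have aab : a \in `[a, b] by rewrite in_itv /= lexx leab.
have bab : b \in `[a, b] by rewrite in_itv /= lexx leab.
have <- : (series_lim b - series_lim b) - (series_lim a - series_lim a) = 0.
  by rewrite !subrr.
by apply: cvgB; (apply: cvgB; [exact: cvg_cst | exact: psum_cvg]).
Qed.

Lemma series_lim_continuous : {within `[a, b], continuous series_lim}.
Proof.
apply: continuous_within_oscillation => e e0.
have [leab|ltba] := leP a b; last first.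
  exists (psum 0); first exact: psum_continuous.
  by move=> x y /=; rewrite in_itv /= => /andP[ax xb]; lra.
have /cvgrPdist_lt/(_ e e0)[N _ tailN] := series_tail_range_cvg0 leab.
exists (psum N); first exact: psum_continuous.
move=> x y xab yab.
have := ler_dist_nondecreasing (series_tail_nondecreasing N) xab yab.
have := tailN N (leqnn N); rewrite sub0r normrN => /(le_lt_trans (ler_norm _)).
rewrite /series_tail; lra.
Qed.

Section image_null.
Variable K : set R.
Hypotheses (K_closed : closed K) (K_sub : K `<=` `[a, b]).
Hypothesis fK0 : forall m, m \in M -> lebesgue_measure (f m @` K) = 0%E.

Lemma psum_grid_variation_cvg0 N : a <= b ->
  grid_variation a b K (psum N) n @[n --> \oo] --> 0.
Proof.
move=> leab; elim: N => [|N IH].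
  rewrite psum0; apply: cvg_near_cst.
  by apply: nearW => n; exact: grid_variation_cst.
rewrite psumS; under eq_fun do rewrite grid_variationD.
rewrite -[0]addr0; apply: cvgD => //; case: ifPn => [NM|_].
  exact: grid_variation_cvg0 (f_cont NM) (f_mono NM) K_closed K_sub (fK0 NM).
by apply: cvg_near_cst; apply: nearW => n; exact: grid_variation_cst.
Qed.

Lemma series_lim_image_null : lebesgue_measure (series_lim @` K) = 0%E.
Proof.
have [leab|ltba] := leP a b; last first.
  suff -> : K = set0 by rewrite image_set0 measure0.
  by apply/seteqP; split => // x /K_sub; rewrite /= in_itv /= => /andP[ax xb]; lra.
have mhK : measurable (series_lim @` K).
  apply: compact_measurable.
  exact: closed_segment_image_compact series_lim_continuous K_closed K_sub.
apply/le_anti/andP; split; last exact: measure_ge0.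
apply/lee_addgt0Pr => e e0; rewrite add0e.
have e2 : 0 < e / 2 by rewrite divr_gt0.
have /cvgrPdist_lt/(_ _ e2)[N _ tailN] := series_tail_range_cvg0 leab.
have /cvgrPdist_lt/(_ _ e2)[n _ varN] := psum_grid_variation_cvg0 N leab.
have n0 : (0 < n.+1)%N by [].
have := measure_image_le_grid_variation leab series_lim_nondecreasing K_sub mhK n0.
move/le_trans; apply.
have -> : series_lim = psum N \+ series_tail N.
  by apply/funext => x /=; rewrite /series_tail; ring.
rewrite lee_fin grid_variationD.
have := grid_variation_le K leab (series_tail_nondecreasing N) n0.
have := tailN N (leqnn N); have := varN n.+1 (leqnSn n); rewrite !sub0r !normrN.
move=> /(le_lt_trans (ler_norm _)) ? /(le_lt_trans (ler_norm _)) ?; lra.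
Qed.

End image_null.
End monotone_series.

Theorem lemma3p3 (R : realType) (a b : R) (M : set nat)
  (hs : nat -> R -> R) (c d : nat -> R) (K : set R) :
  (forall m, m \in M -> {within `[a, b], continuous hs m}) ->
  (forall m, m \in M -> {in `[a, b] &, nondecreasing (hs m)}) ->
  (forall m, m \in M -> forall x, x \in `[a, b] -> hs m x \in `[c m, d m]) ->
  (forall x, x \in `[a, b] ->
     cvgn (fun n => \sum_(0 <= m < n | m \in M) hs m x)) ->
  closed K -> K `<=` `[a, b] ->
  (forall m, m \in M -> (@lebesgue_measure R) (hs m @` K) = 0%E) ->
  let h := fun x => limn (fun n => \sum_(0 <= m < n | m \in M) hs m x) in
  [/\ {within `[a, b], continuous h},
      {in `[a, b] &, nondecreasing h},
      (exists c0 d0 : R, forall x, x \in `[a, b] -> h x \in `[c0, d0]) &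
      (@lebesgue_measure R) (h @` K) = 0%E].
Proof.
move=> hs_cont hs_mono _ hs_cvg K_closed K_sub hsK0 h.
have h_mono : {in `[a, b] &, nondecreasing h}.
  exact: series_lim_nondecreasing hs_mono hs_cvg.
split => //.
- exact: series_lim_continuous hs_cont hs_mono hs_cvg.
- by exists (h a), (h b) => x; exact: nondecreasing_segment_image.
- exact: (series_lim_image_null hs_cont hs_mono hs_cvg K_closed K_sub hsK0).
Qed.
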